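(* A continuous function $f:[0,1]\to\mathbb{R}$ is of bounded variation if and only if $f=g+h$ for some continuous functions $g,h:[0,1]\to\mathbb{R}$ whose graphs are $1$-monotone.
   Context: A metric space $(X,d)$ is $c$-monotone ($c>0$) if there is a linear order $<$ on $X$ such that $d(x,y)\le c\,d(x,z)$ whenever $x<y<z$ in $X$. The graph of $g$ is $\{(x,g(x)):x\in[0,1]\}\subseteq\mathbb{R}^2$ with the Euclidean metric. *)

From Stdlib Require Import Reals Lra List.
Open Scope R_scope.

Definition cont_on_01 (f : R -> R) : Prop :=
  forall x, 0 <= x <= 1 -> forall eps, 0 < eps ->
    exists delta, 0 < delta /\
      forall y, 0 <= y <= 1 -> Rabs (y - x) < delta -> Rabs (f y - f x) < eps.

Fixpoint variation_along (f : R -> R) (x0 : R) (l : list R) : R :=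
  match l with
  | nil => 0
  | x1 :: l' => Rabs (f x1 - f x0) + variation_along f x1 l'
  end.

(* A partition 0 = x0 < x1 < ... < xn = 1, given as x0 = 0 and the list [x1;...;xn]. *)
Fixpoint incr_from (x0 : R) (l : list R) : Prop :=
  match l with
  | nil => True
  | x1 :: l' => x0 < x1 /\ incr_from x1 l'
  end.

Definition partition01 (l : list R) : Prop :=
  incr_from 0 l /\ last l 0 = 1.

Definition bounded_variation_01 (f : R -> R) : Prop :=
  exists M, forall l, partition01 l -> variation_along f 0 l <= M.

Definition dist2 (p q : R * R) : R :=
  sqrt ((fst p - fst q) ^ 2 + (snd p - snd q) ^ 2).

Definition strict_linear_order_on {T : Type} (S : T -> Prop) (lt : T -> T -> Prop) : Prop :=
  (forall x, S x -> ~ lt x x) /\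
  (forall x y z, S x -> S y -> S z -> lt x y -> lt y z -> lt x z) /\
  (forall x y, S x -> S y -> x <> y -> lt x y \/ lt y x).

Definition c_monotone (c : R) (S : R * R -> Prop) : Prop :=
  exists lt : R * R -> R * R -> Prop,
    strict_linear_order_on S lt /\
    forall x y z, S x -> S y -> S z -> lt x y -> lt y z ->
      dist2 x y <= c * dist2 x z.

Definition graph01 (g : R -> R) : R * R -> Prop :=
  fun p => 0 <= fst p <= 1 /\ snd p = g (fst p).

From Stdlib Require Import Reals Lra Psatz List Classical ClassicalEpsilon.
Open Scope R_scope.

(* If f has bounded variation, its variation function V(x) = Var_[0,x] f is continuous and
   both V and f - V are monotone; the graph of a monotone function is 1-monotone for the
   order of abscissae.  Conversely, let g be continuous with a 1-monotone graph.  By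
   connectedness of [0, 1] the order on the graph is monotone in the abscissa, so that the
   distance from a point of the graph grows as one moves away from it along the graph.
   Hence each rise |g x_(i+1) - g x_i| of a subdivision is paid for by x_(i+1) - x_i or by
   progress of the running extrema of g t + t and g t - t, which bounds the variation of g
   in terms of sup |g|.  Finally, bounded variation is stable under sums. *)

Lemma last_cons {A : Type} (x : A) (l : list A) (d : A) : last (x :: l) d = last l x.
Proof.
  revert x d; induction l as [|y l IH]; intros x d; [reflexivity|].
  change (last (y :: l) d = last (y :: l) x). now rewrite !IH.
Qed.

Lemma last_app {A : Type} (l1 l2 : list A) (d : A) : last (l1 ++ l2) d = last l2 (last l1 d).
Proof.
  revert d; induction l1 as [|x l1 IH]; intros d; [reflexivity|].
  rewrite <- app_comm_cons, !last_cons. apply IH.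
Qed.

Lemma incr_from_app l1 l2 a :
  incr_from a l1 -> incr_from (last l1 a) l2 -> incr_from a (l1 ++ l2).
Proof.
  revert a; induction l1 as [|x l1 IH]; intros a H1 H2; [exact H2|].
  destruct H1 as [Hax H1]. rewrite last_cons in H2. split; auto.
Qed.

Lemma incr_from_app_l l1 l2 a : incr_from a (l1 ++ l2) -> incr_from a l1.
Proof.
  revert a; induction l1 as [|x l1 IH]; intros a H; [exact I|].
  destruct H as [Hax H]. split; eauto.
Qed.

Lemma incr_from_snoc_lt l y a : incr_from a (l ++ y :: nil) -> last l a < y.
Proof.
  revert a; induction l as [|x l IH]; intros a H; [exact (proj1 H)|].
  destruct H as [_ H]. rewrite last_cons. auto.
Qed.

Lemma incr_from_last_ge l a : incr_from a l -> a <= last l a.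
Proof.
  revert a; induction l as [|x l IH]; intros a Hl; [simpl; lra|].
  destruct Hl as [Hax Hl]. rewrite last_cons. specialize (IH x Hl). lra.
Qed.

Lemma incr_from_In l a t : incr_from a l -> In t l -> a < t <= last l a.
Proof.
  revert a; induction l as [|x l IH]; intros a Hl Ht; [destruct Ht|].
  destruct Hl as [Hax Hl]. rewrite last_cons.
  destruct Ht as [<-|Ht].
  - pose proof (incr_from_last_ge l x Hl). lra.
  - specialize (IH x Hl Ht). lra.
Qed.

Definition subdivision (a b : R) (l : list R) : Prop := incr_from a l /\ last l a = b.

Lemma variation_along_app f l1 l2 a :
  variation_along f a (l1 ++ l2) = variation_along f a l1 + variation_along f (last l1 a) l2.
Proof.
  revert a; induction l1 as [|x l1 IH]; intros a; [simpl; ring|].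
  rewrite <- app_comm_cons; cbn [variation_along]. rewrite IH, last_cons. ring.
Qed.

Lemma subdivision_app f a b c l1 l2 : subdivision a b l1 -> subdivision b c l2 ->
  subdivision a c (l1 ++ l2) /\
  variation_along f a (l1 ++ l2) = variation_along f a l1 + variation_along f b l2.
Proof.
  intros [H1 E1] [H2 E2]. rewrite variation_along_app, E1.
  split; [split|]; auto.
  - apply incr_from_app; congruence.
  - now rewrite last_app, E1.
Qed.

Lemma subdivision_split f l a b c : subdivision a c l -> a <= b <= c ->
  exists l1 l2, subdivision a b l1 /\ subdivision b c l2 /\
    variation_along f a l <= variation_along f a l1 + variation_along f b l2.
Proof.
  revert a; induction l as [|x l IH]; intros a [Hi Hl] Hb.
  - simpl in Hl. exists nil, nil.
    split; [split; [exact I|simpl; lra]|split; [split; [exact I|simpl; lra]|simpl; lra]].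
  - destruct Hi as [Hax Hi]. rewrite last_cons in Hl.
    destruct (Rlt_dec x b) as [Hxb|Hxb].
    + destruct (IH x (conj Hi Hl) ltac:(lra)) as (l1 & l2 & [P1 E1] & P2 & Hv).
      exists (x :: l1), l2.
      split; [split; [split; auto|now rewrite last_cons]|split; [exact P2|simpl; lra]].
    + destruct (Req_dec x b) as [<-|Hxb'].
      { exists (x :: nil), l.
        split; [split; [split; [lra|exact I]|reflexivity]|split; [split; auto|simpl; lra]]. }
      destruct (Req_dec a b) as [<-|Hab].
      * exists nil, (x :: l).
        split; [split; [exact I|reflexivity]|].
        split; [split; [split; auto|now rewrite last_cons]|simpl; lra].
      * exists (b :: nil), (x :: l).
        split; [split; [split; [lra|exact I]|reflexivity]|].
        split; [split; [split; [lra|exact Hi]|now rewrite last_cons]|].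
        simpl. pose proof (Rabs_triang (f b - f a) (f x - f b)).
        replace (f b - f a + (f x - f b)) with (f x - f a) in H by ring. lra.
Qed.

Lemma variation_along_plus f g h l a :
  (forall t, t = a \/ In t l -> f t = g t + h t) ->
  variation_along f a l <= variation_along g a l + variation_along h a l.
Proof.
  revert a; induction l as [|x l IH]; intros a Hfgh; simpl; [lra|].
  rewrite (Hfgh x (or_intror (or_introl eq_refl))), (Hfgh a (or_introl eq_refl)).
  pose proof (Rabs_triang (g x - g a) (h x - h a)).
  replace (g x + h x - (g a + h a)) with (g x - g a + (h x - h a)) by ring.
  assert (variation_along f x l <= variation_along g x l + variation_along h x l).
  { apply IH. intros t [<-|Ht]; apply Hfgh; simpl; auto. }
  lra.
Qed.

Lemma bounded_variation_01_plus f g h :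
  (forall t, 0 <= t <= 1 -> f t = g t + h t) ->
  bounded_variation_01 g -> bounded_variation_01 h -> bounded_variation_01 f.
Proof.
  intros Hfgh [Mg Hg] [Mh Hh]. exists (Mg + Mh). intros l Hl.
  assert (variation_along f 0 l <= variation_along g 0 l + variation_along h 0 l).
  { apply variation_along_plus. intros t [->|Ht]; apply Hfgh; [lra|].
    destruct Hl as [Hi Hlast]. pose proof (incr_from_In l 0 t Hi Ht). lra. }
  specialize (Hg l Hl). specialize (Hh l Hl). lra.
Qed.

Lemma is_lub_exists_gt (E : R -> Prop) c y : is_lub E c -> y < c -> exists x, E x /\ y < x.
Proof.
  intros [_ Hleast] Hy. apply NNPP. intro Hnone.
  assert (Hub : is_upper_bound E y).
  { intros x Ex. apply Rnot_lt_le. intro Hyx. apply Hnone. now exists x. }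
  specialize (Hleast y Hub). lra.
Qed.

(* Connectedness of [a, b], via the supremum of the initial segments on which P holds. *)
Lemma locally_constant_interval (P : R -> Prop) a b : a <= b ->
  (forall x, a <= x <= b -> exists d, 0 < d /\
     forall y, a <= y <= b -> Rabs (y - x) < d -> (P y <-> P x)) ->
  P a <-> P b.
Proof.
  intros Hab Hloc.
  assert (propagate : forall Q : R -> Prop,
            (forall x, a <= x <= b -> exists d, 0 < d /\
               forall y, a <= y <= b -> Rabs (y - x) < d -> (Q y <-> Q x)) -> Q a -> Q b).
  { intros Q HQ Qa.
    set (E x := a <= x <= b /\ forall y, a <= y <= x -> Q y).
    assert (Ea : E a) by (split; [lra|]; intros y Hy; now replace y with a by lra).
    destruct (completeness E) as [c Hc].
    { exists b. now intros x [Hx _]. }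
    { now exists a. }
    assert (Hac : a <= c) by exact (proj1 Hc a Ea).
    assert (Hcb : c <= b) by (apply (proj2 Hc); now intros x [Hx _]).
    destruct (HQ c ltac:(lra)) as [d [Hd Hnear]].
    destruct (is_lub_exists_gt E c (c - d) Hc ltac:(lra)) as [x [[Hx Qx] Hxd]].
    assert (Hxc : x <= c) by exact (proj1 Hc x (conj Hx Qx)).
    assert (Qbelow : forall y, a <= y <= b -> y <= c + d / 2 -> Q y).
    { intros y Hy Hyc. destruct (Rle_dec y x) as [Hyx|Hyx]; [apply Qx; lra|].
      apply (proj2 (Hnear y Hy ltac:(apply Rabs_def1; lra))).
      apply (proj1 (Hnear x ltac:(lra) ltac:(apply Rabs_def1; lra))), Qx; lra. }
    destruct (Rle_lt_dec b (c + d / 2)) as [Hb|Hb]; [apply Qbelow; lra|].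
    assert (Ecd : E (c + d / 2)) by (split; [lra|]; intros y Hy; apply Qbelow; lra).
    pose proof (proj1 Hc _ Ecd). lra. }
  split; [apply propagate; exact Hloc|].
  intro Pb. apply NNPP. intro nPa. revert Pb.
  apply (propagate (fun x => ~ P x)); [|exact nPa].
  intros x Hx. destruct (Hloc x Hx) as [d [Hd Hnear]].
  exists d. split; [exact Hd|]. intros y Hy Hyx. specialize (Hnear y Hy Hyx). tauto.
Qed.

Lemma cont_on_01_bounded g : cont_on_01 g -> exists B, forall t, 0 <= t <= 1 -> Rabs (g t) <= B.
Proof.
  intros Hg.
  set (P x := exists B, forall t, 0 <= t <= x -> Rabs (g t) <= B).
  assert (HP : P 1).
  { apply (locally_constant_interval P 0 1); [lra| |exists (Rabs (g 0)); intros t Ht;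
      now replace t with 0 by lra].
    intros x Hx. destruct (Hg x Hx 1 Rlt_0_1) as [d [Hd Hnear]].
    exists d. split; [exact Hd|]. intros y Hy Hyx.
    assert (extend : forall u v, 0 <= u <= 1 -> 0 <= v <= 1 -> Rabs (u - x) < d ->
              Rabs (v - x) < d -> P u -> P v).
    { intros u v Hu Hv Hux Hvx [B HB]. exists (Rmax B (Rabs (g x) + 1)). intros t Ht.
      destruct (Rle_dec t u) as [Htu|Htu].
      - apply Rle_trans with B; [apply HB; lra|apply Rmax_l].
      - apply Rle_trans with (Rabs (g x) + 1); [|apply Rmax_r].
        apply Rabs_def2 in Hux. apply Rabs_def2 in Hvx.
        pose proof (Hnear t ltac:(lra) ltac:(apply Rabs_def1; lra)).
        pose proof (Rabs_triang_inv (g t) (g x)). lra. }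
    split; apply extend; auto; rewrite ?Rminus_diag, ?Rabs_R0; auto. }
  destruct HP as [B HB]. now exists B.
Qed.

Lemma cont_on_01_minus f g : cont_on_01 f -> cont_on_01 g -> cont_on_01 (fun t => f t - g t).
Proof.
  intros Hf Hg x Hx e He.
  destruct (Hf x Hx (e / 2) ltac:(lra)) as [d1 [Hd1 H1]].
  destruct (Hg x Hx (e / 2) ltac:(lra)) as [d2 [Hd2 H2]].
  exists (Rmin d1 d2). split; [now apply Rmin_glb_lt|].
  intros y Hy Hyx. pose proof (Rmin_l d1 d2). pose proof (Rmin_r d1 d2).
  specialize (H1 y Hy ltac:(lra)). specialize (H2 y Hy ltac:(lra)).
  pose proof (Rabs_triang (f y - f x) (- (g y - g x))) as T. rewrite Rabs_Ropp in T.
  replace (f y - f x + - (g y - g x)) with (f y - g y - (f x - g x)) in T by ring. lra.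
Qed.

Lemma monotone_graph_1_monotone g :
  (forall s t, 0 <= s -> s <= t -> t <= 1 -> g s <= g t) \/
  (forall s t, 0 <= s -> s <= t -> t <= 1 -> g t <= g s) ->
  c_monotone 1 (graph01 g).
Proof.
  intros Hmon. exists (fun p q => fst p < fst q). split.
  - split; [intros x _; lra|]. split; [intros x y z _ _ _; lra|].
    intros [x1 x2] [y1 y2] [Hx Ex] [Hy Ey] Hxy; simpl in *.
    destruct (Rtotal_order x1 y1) as [h|[<-|h]]; auto.
    exfalso. apply Hxy. now subst.
  - intros [x1 x2] [y1 y2] [z1 z2] [Hx Ex] [Hy Ey] [Hz Ez] H1 H2. simpl in *. subst.
    unfold dist2; simpl. rewrite Rmult_1_l. apply sqrt_le_1_alt.
    destruct Hmon as [M|M];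
      pose proof (M x1 y1 ltac:(lra) ltac:(lra) ltac:(lra));
      pose proof (M y1 z1 ltac:(lra) ltac:(lra) ltac:(lra)); nra.
Qed.

Definition variations_upto (f : R -> R) (x v : R) : Prop :=
  exists l, subdivision 0 x l /\ v = variation_along f 0 l.

(* The variation of f on [0, x]; an arbitrary real unless the supremum exists. *)
Definition total_variation (f : R -> R) (x : R) : R :=
  epsilon (inhabits 0) (is_lub (variations_upto f x)).

Section Jordan.

Variable f : R -> R.
Hypothesis f_cont : cont_on_01 f.
Variable M : R.
Hypothesis f_bv : forall l, partition01 l -> variation_along f 0 l <= M.

Let V := total_variation f.

Lemma variation_upto_le_bound x l : 0 <= x <= 1 -> subdivision 0 x l ->
  variation_along f 0 l <= M.
Proof.
  intros Hx Hl. destruct (Req_dec x 1) as [->|Hx1]; [now apply f_bv|].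
  assert (H1 : subdivision x 1 (1 :: nil)) by (split; [split; [lra|exact I]|reflexivity]).
  destruct (subdivision_app f 0 x 1 l (1 :: nil) Hl H1) as [Hl1 Hvar].
  specialize (f_bv _ Hl1). rewrite Hvar in f_bv. simpl in f_bv.
  pose proof (Rabs_pos (1 - x)). pose proof (Rabs_pos (f 1 - f x)). lra.
Qed.

Lemma total_variation_is_lub x : 0 <= x <= 1 -> is_lub (variations_upto f x) (V x).
Proof.
  intros Hx. unfold V, total_variation. apply epsilon_spec.
  destruct (completeness (variations_upto f x)) as [m Hm]; [| |now exists m].
  - exists M. intros v [l [Hl ->]]. exact (variation_upto_le_bound x l Hx Hl).
  - destruct (Req_dec x 0) as [->|Hx0].
    + exists 0, nil. split; [split; [exact I|reflexivity]|reflexivity].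
    + exists (variation_along f 0 (x :: nil)), (x :: nil).
      split; [split; [split; [lra|exact I]|reflexivity]|reflexivity].
Qed.

Lemma variation_le_total_variation x l : 0 <= x <= 1 -> subdivision 0 x l ->
  variation_along f 0 l <= V x.
Proof. intros Hx Hl. apply (proj1 (total_variation_is_lub x Hx)). now exists l. Qed.

Lemma total_variation_le x K : 0 <= x <= 1 ->
  (forall l, subdivision 0 x l -> variation_along f 0 l <= K) -> V x <= K.
Proof.
  intros Hx HK. apply (proj2 (total_variation_is_lub x Hx)).
  intros v [l [Hl ->]]. auto.
Qed.

Lemma total_variation_approx x e : 0 <= x <= 1 -> 0 < e ->
  exists l, subdivision 0 x l /\ V x - e < variation_along f 0 l.
Proof.
  intros Hx He.
  destruct (is_lub_exists_gt _ _ (V x - e) (total_variation_is_lub x Hx) ltac:(lra))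
    as [v [[l [Hl ->]] Hv]].
  now exists l.
Qed.

Lemma total_variation_step x y : 0 <= x -> x < y -> y <= 1 ->
  V x + Rabs (f y - f x) <= V y.
Proof.
  intros Hx Hxy Hy.
  enough (V x <= V y - Rabs (f y - f x)) by lra.
  apply total_variation_le; [lra|]. intros l Hl.
  assert (Hxy' : subdivision x y (y :: nil)) by (split; [split; [lra|exact I]|reflexivity]).
  destruct (subdivision_app f 0 x y l (y :: nil) Hl Hxy') as [Hly Hvar].
  pose proof (variation_le_total_variation y _ ltac:(lra) Hly).
  rewrite Hvar in H. simpl in H. lra.
Qed.

Lemma total_variation_nondecreasing s t : 0 <= s -> s <= t -> t <= 1 -> V s <= V t.
Proof.
  intros Hs Hst Ht. destruct (Req_dec s t) as [->|Hne]; [lra|].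
  pose proof (total_variation_step s t Hs ltac:(lra) Ht). pose proof (Rabs_pos (f t - f s)). lra.
Qed.

Lemma minus_total_variation_nonincreasing s t : 0 <= s -> s <= t -> t <= 1 ->
  f t - V t <= f s - V s.
Proof.
  intros Hs Hst Ht. destruct (Req_dec s t) as [->|Hne]; [lra|].
  pose proof (total_variation_step s t Hs ltac:(lra) Ht). pose proof (Rle_abs (f t - f s)). lra.
Qed.

Lemma subdivision_shrink_right x l e : 0 <= x <= 1 -> 0 < e -> subdivision 0 x l ->
  exists d, 0 < d /\ forall a, 0 <= a -> a <= x -> x - d < a ->
    exists L, subdivision 0 a L /\ variation_along f 0 l - e <= variation_along f 0 L.
Proof.
  intros Hx He [Hi Hlast]. destruct (f_cont x Hx e He) as [df [Hdf Hnear]].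
  destruct (list_eq_dec Req_EM_T l nil) as [->|Hne].
  - simpl in Hlast. exists 1. split; [lra|]. intros a Ha Hax _.
    exists nil. split; [split; [exact I|simpl; lra]|simpl; lra].
  - destruct (exists_last Hne) as [l' [z ->]].
    rewrite last_app in Hlast. simpl in Hlast. subst z.
    pose proof (incr_from_snoc_lt l' x 0 Hi) as Hz.
    exists (Rmin (x - last l' 0) df). split; [apply Rmin_glb_lt; lra|].
    intros a Ha Hax Hda.
    pose proof (Rmin_l (x - last l' 0) df). pose proof (Rmin_r (x - last l' 0) df).
    exists (l' ++ a :: nil). split.
    + split; [|now rewrite last_app].
      apply incr_from_app; [exact (incr_from_app_l l' _ 0 Hi)|split; [lra|exact I]].
    + rewrite !variation_along_app. simpl.
      assert (Hfa : Rabs (f a - f x) < e) by (apply Hnear; [lra|apply Rabs_def1; lra]).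
      pose proof (Rabs_triang (f a - f (last l' 0)) (f x - f a)) as T.
      replace (f a - f (last l' 0) + (f x - f a)) with (f x - f (last l' 0)) in T by ring.
      rewrite Rabs_minus_sym in Hfa. lra.
Qed.

Lemma subdivision_shrink_left x l e : 0 <= x <= 1 -> 0 < e -> subdivision x 1 l ->
  exists d, 0 < d /\ forall b, x <= b -> b <= 1 -> b < x + d ->
    exists L, subdivision b 1 L /\ variation_along f x l - e <= variation_along f b L.
Proof.
  intros Hx He [Hi Hlast]. destruct (f_cont x Hx e He) as [df [Hdf Hnear]].
  destruct l as [|w l].
  - simpl in Hlast. exists 1. split; [lra|]. intros b Hxb Hb _.
    exists nil. split; [split; [exact I|simpl; lra]|simpl; lra].
  - destruct Hi as [Hxw Hi]. rewrite last_cons in Hlast.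
    exists (Rmin (w - x) df). split; [apply Rmin_glb_lt; lra|].
    intros b Hxb Hb Hdb.
    pose proof (Rmin_l (w - x) df). pose proof (Rmin_r (w - x) df).
    exists (w :: l). split; [split; [split; [lra|exact Hi]|now rewrite last_cons]|].
    simpl.
    assert (Hfb : Rabs (f b - f x) < e) by (apply Hnear; [lra|apply Rabs_def1; lra]).
    pose proof (Rabs_triang (f w - f b) (f b - f x)) as T.
    replace (f w - f b + (f b - f x)) with (f w - f x) in T by ring. lra.
Qed.

(* Split a subdivision almost realising V 1 at x and move its points x to a and b: what is
   left for [a, b] is at most the defect. *)
Lemma variation_near_small x e : 0 <= x <= 1 -> 0 < e -> exists d, 0 < d /\
  forall a b q, 0 <= a -> a <= x -> x <= b -> b <= 1 -> x - d < a -> b < x + d ->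
    subdivision a b q -> variation_along f a q <= 3 * e.
Proof.
  intros Hx He.
  destruct (total_variation_approx 1 e ltac:(lra) He) as [l [Hl Hvl]].
  destruct (subdivision_split f l 0 x 1 Hl ltac:(lra)) as (l1 & l2 & H1 & H2 & Hv12).
  destruct (subdivision_shrink_right x l1 e Hx He H1) as [d1 [Hd1 Hleft]].
  destruct (subdivision_shrink_left x l2 e Hx He H2) as [d2 [Hd2 Hright]].
  exists (Rmin d1 d2). split; [now apply Rmin_glb_lt|].
  intros a b q Ha Hax Hxb Hb Hda Hdb Hq.
  pose proof (Rmin_l d1 d2). pose proof (Rmin_r d1 d2).
  destruct (Hleft a Ha Hax ltac:(lra)) as [L1 [HL1 HvL1]].
  destruct (Hright b Hxb Hb ltac:(lra)) as [L2 [HL2 HvL2]].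
  destruct (subdivision_app f 0 a b L1 q HL1 Hq) as [HL1q Hv1].
  destruct (subdivision_app f 0 b 1 (L1 ++ q) L2 HL1q HL2) as [HL Hv].
  pose proof (variation_le_total_variation 1 _ ltac:(lra) HL). lra.
Qed.

Lemma total_variation_cont : cont_on_01 V.
Proof.
  intros x Hx e He.
  destruct (variation_near_small x (e / 6) Hx ltac:(lra)) as [d [Hd Hsmall]].
  exists d. split; [exact Hd|]. intros y Hy Hyx. apply Rabs_def2 in Hyx.
  assert (Hgap : forall s t, 0 <= s -> s <= t -> t <= 1 -> s <= x <= t ->
            Rabs (t - s) < d -> V t <= V s + e / 2).
  { intros s t Hs Hst Ht Hxst Hts. apply Rabs_def2 in Hts.
    apply total_variation_le; [lra|]. intros q Hq.
    destruct (subdivision_split f q 0 s t Hq ltac:(lra)) as (q1 & q2 & Q1 & Q2 & Hvq).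
    pose proof (variation_le_total_variation s q1 ltac:(lra) Q1).
    pose proof (Hsmall s t q2 Hs ltac:(lra) ltac:(lra) Ht ltac:(lra) ltac:(lra) Q2). lra. }
  destruct (Rle_dec x y) as [Hxy|Hxy].
  - pose proof (total_variation_nondecreasing x y ltac:(lra) Hxy ltac:(lra)).
    pose proof (Hgap x y ltac:(lra) Hxy ltac:(lra) ltac:(lra) ltac:(apply Rabs_def1; lra)).
    apply Rabs_def1; lra.
  - pose proof (total_variation_nondecreasing y x ltac:(lra) ltac:(lra) ltac:(lra)).
    pose proof (Hgap y x ltac:(lra) ltac:(lra) ltac:(lra) ltac:(lra) ltac:(apply Rabs_def1; lra)).
    apply Rabs_def1; lra.
Qed.

End Jordan.

Definition graph_pt (g : R -> R) (t : R) : R * R := (t, g t).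

Definition sqdist (g : R -> R) (s t : R) : R := (s - t) ^ 2 + (g s - g t) ^ 2.

Lemma sqdist_sym g s t : sqdist g s t = sqdist g t s.
Proof. unfold sqdist. ring. Qed.

Lemma sqdist_diag g t : sqdist g t t = 0.
Proof. unfold sqdist. ring. Qed.

Lemma sqdist_nonneg g s t : 0 <= sqdist g s t.
Proof. unfold sqdist. pose proof (pow2_ge_0 (s - t)). pose proof (pow2_ge_0 (g s - g t)). lra. Qed.

Lemma sqdist_pos g s t : s <> t -> 0 < sqdist g s t.
Proof.
  intros Hst. unfold sqdist. assert (s - t <> 0) by lra.
  pose proof (pow2_ge_0 (g s - g t)). simpl. nra.
Qed.

Lemma sqdist_le_twice g s t u : sqdist g t u <= 2 * (sqdist g s u + sqdist g s t).
Proof.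
  unfold sqdist.
  pose proof (pow2_ge_0 ((s - u) + (s - t))). pose proof (pow2_ge_0 ((g s - g u) + (g s - g t))).
  nra.
Qed.

Lemma sqdist_small g t r : cont_on_01 g -> 0 <= t <= 1 -> 0 < r ->
  exists d, 0 < d /\ forall s, 0 <= s <= 1 -> Rabs (s - t) < d -> sqdist g s t < r.
Proof.
  intros Hg Ht Hr.
  set (eta := Rmin 1 (r / 4)).
  assert (Heta : 0 < eta /\ eta <= 1 /\ eta <= r / 4)
    by (split; [apply Rmin_glb_lt|split; [apply Rmin_l|apply Rmin_r]]; lra).
  clearbody eta. destruct (Hg t Ht eta (proj1 Heta)) as [dg [Hdg Hnear]].
  exists (Rmin dg eta). split; [apply Rmin_glb_lt; lra|]. intros s Hs Hst.
  pose proof (Rmin_l dg eta). pose proof (Rmin_r dg eta).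
  specialize (Hnear s Hs ltac:(lra)).
  apply Rabs_def2 in Hst. apply Rabs_def2 in Hnear. unfold sqdist. nra.
Qed.

Section OneMonotoneGraph.

Variable g : R -> R.
Hypothesis g_cont : cont_on_01 g.
Variable before : R * R -> R * R -> Prop.
Hypothesis before_order : strict_linear_order_on (graph01 g) before.
Hypothesis before_1_monotone : forall x y z,
  graph01 g x -> graph01 g y -> graph01 g z -> before x y -> before y z ->
  dist2 x y <= 1 * dist2 x z.

Let lt s t := before (graph_pt g s) (graph_pt g t).

Lemma graph_pt_graph01 t : 0 <= t <= 1 -> graph01 g (graph_pt g t).
Proof. intros Ht. now split. Qed.

Lemma lt_asym s t : 0 <= s <= 1 -> 0 <= t <= 1 -> lt s t -> ~ lt t s.
Proof.
  intros Hs Ht Hst Hts. destruct before_order as [Hirr [Htrans _]].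
  apply (Hirr _ (graph_pt_graph01 s Hs)).
  exact (Htrans _ _ _ (graph_pt_graph01 s Hs) (graph_pt_graph01 t Ht)
           (graph_pt_graph01 s Hs) Hst Hts).
Qed.

Lemma lt_total s t : 0 <= s <= 1 -> 0 <= t <= 1 -> s <> t -> lt s t \/ lt t s.
Proof.
  intros Hs Ht Hst. apply (proj2 (proj2 before_order)); try now apply graph_pt_graph01.
  intros E. apply Hst. now injection E.
Qed.

Lemma lt_sqdist q a b : 0 <= q <= 1 -> 0 <= a <= 1 -> 0 <= b <= 1 ->
  lt q a -> lt a b -> sqdist g q a <= sqdist g q b.
Proof.
  intros Hq Ha Hb Hqa Hab.
  pose proof (before_1_monotone _ _ _ (graph_pt_graph01 q Hq) (graph_pt_graph01 a Ha)
                (graph_pt_graph01 b Hb) Hqa Hab) as H.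
  unfold dist2 in H; simpl in H. rewrite Rmult_1_l in H.
  apply sqrt_le_0 in H; [exact H| |]; apply sqdist_nonneg.
Qed.

(* If s were on the other side of a than the nearby t, the 1-monotone inequality would
   force a distance comparable to |ta| to be smaller than the tiny |st|. *)
Lemma lt_locally_constant t a : 0 <= t <= 1 -> 0 <= a <= 1 -> t <> a ->
  exists d, 0 < d /\ forall s, 0 <= s <= 1 -> Rabs (s - t) < d -> s <> a ->
    (lt s a <-> lt t a).
Proof.
  intros Ht Ha Hta. pose proof (sqdist_pos g t a Hta) as Hr.
  destruct (sqdist_small g t (sqdist g t a / 4) g_cont Ht ltac:(lra)) as [d [Hd Hnear]].
  exists d. split; [exact Hd|]. intros s Hs Hst Hsa.
  specialize (Hnear s Hs Hst). split; intro Hlt.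
  - destruct (lt_total t a Ht Ha Hta) as [Hta'|Hat]; [exact Hta'|exfalso].
    pose proof (lt_sqdist s a t Hs Ha Ht Hlt Hat).
    pose proof (sqdist_le_twice g s t a). lra.
  - destruct (lt_total s a Hs Ha Hsa) as [Hsa'|Has]; [exact Hsa'|exfalso].
    pose proof (lt_sqdist t a s Ht Ha Hs Hlt Has). rewrite sqdist_sym in Hnear. lra.
Qed.

Lemma lt_same_side a s1 s2 : 0 <= a <= 1 -> 0 <= s1 -> s1 <= s2 -> s2 <= 1 ->
  a < s1 \/ s2 < a -> (lt s1 a <-> lt s2 a).
Proof.
  intros Ha Hs1 Hs12 Hs2 Hside.
  apply (locally_constant_interval (fun s => lt s a) s1 s2 Hs12).
  intros x Hx. destruct (lt_locally_constant x a ltac:(lra) Ha ltac:(lra)) as [d [Hd Hnear]].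
  exists d. split; [exact Hd|]. intros y Hy Hyx. apply Hnear; lra.
Qed.

Lemma lt_iff_lt_0_1 s t : 0 <= s -> s < t -> t <= 1 -> (lt s t <-> lt 0 1).
Proof.
  intros Hs Hst Ht.
  assert (flip : forall u, 0 < u <= 1 -> (lt 0 u <-> ~ lt u 0)).
  { intros u Hu. split; [apply lt_asym; lra|].
    intros Hnot. destruct (lt_total 0 u ltac:(lra) ltac:(lra) ltac:(lra)); tauto. }
  rewrite <- (lt_same_side t 0 s ltac:(lra) ltac:(lra) ltac:(lra) ltac:(lra) ltac:(lra)).
  rewrite (flip t ltac:(lra)), (flip 1 ltac:(lra)).
  now rewrite (lt_same_side 0 t 1 ltac:(lra) ltac:(lra) ltac:(lra) ltac:(lra) ltac:(lra)).
Qed.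

Lemma graph_sqdist_monotone :
  (forall q a b, 0 <= q <= a -> a < b -> b <= 1 -> sqdist g q a <= sqdist g q b) \/
  (forall q a b, 0 <= a -> a < b -> b <= q -> q <= 1 -> sqdist g q b <= sqdist g q a).
Proof.
  destruct (classic (lt 0 1)) as [H01|H10]; [left|right].
  - intros q a b Hqa Hab Hb. destruct (Req_dec q a) as [<-|Hqa'].
    + rewrite sqdist_diag. apply sqdist_nonneg.
    + apply lt_sqdist; try lra.
      * exact (proj2 (lt_iff_lt_0_1 q a ltac:(lra) ltac:(lra) ltac:(lra)) H01).
      * exact (proj2 (lt_iff_lt_0_1 a b ltac:(lra) ltac:(lra) ltac:(lra)) H01).
  - assert (Hdecr : forall s t, 0 <= s -> s < t -> t <= 1 -> lt t s).
    { intros s t Hs Hst Ht.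
      destruct (lt_total s t ltac:(lra) ltac:(lra) ltac:(lra)) as [Hlt|Hlt]; [|exact Hlt].
      exfalso. now apply H10, (lt_iff_lt_0_1 s t). }
    intros q a b Ha Hab Hbq Hq. destruct (Req_dec q b) as [<-|Hqb].
    + rewrite sqdist_diag. apply sqdist_nonneg.
    + apply lt_sqdist; try lra; apply Hdecr; lra.
Qed.

End OneMonotoneGraph.

(* Going from (xc, yc) to (xn, yn), the rise |yn - yc| is paid for by xn - xc, or by an
   increase of the running maximum of y + x (witnessed by w) when y goes up, or by a
   decrease of the running minimum of y - x (witnessed by v) when y goes down. *)
Lemma step_rise_bound xc yc xn yn xw yw xv yv :
  xc < xn -> xw <= xc -> xv <= xc ->
  (xc - xw) ^ 2 + (yc - yw) ^ 2 <= (xn - xw) ^ 2 + (yn - yw) ^ 2 ->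
  (xc - xv) ^ 2 + (yc - yv) ^ 2 <= (xn - xv) ^ 2 + (yn - yv) ^ 2 ->
  Rabs (yn - yc) <= (xn - xc) + 2 * (Rmax (yw + xw) (yn + xn) - (yw + xw))
                    + 2 * ((yv - xv) - Rmin (yv - xv) (yn - xn)).
Proof.
  intros Hx Hw Hv Dw Dv.
  pose proof (Rmax_l (yw + xw) (yn + xn)). pose proof (Rmax_r (yw + xw) (yn + xn)).
  pose proof (Rmin_l (yv - xv) (yn - xn)). pose proof (Rmin_r (yv - xv) (yn - xn)).
  destruct (Rle_dec yc yn) as [Hup|Hdown].
  - rewrite Rabs_right by lra.
    destruct (Rle_dec (yc + yn + xc + xn) (2 * (yw + xw))) as [Hc|Hc]; [|lra].
    enough (yn - yc <= xn - xc) by lra.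
    apply Rnot_lt_le. intro Hgt.
    assert ((yn - yc) * (2 * yw - yc - yn) <= (xn - xc) * (xn + xc - 2 * xw)) by nra.
    nra.
  - rewrite Rabs_left by lra.
    destruct (Rle_dec (2 * (yv - xv)) (yc + yn - xc - xn)) as [Hc|Hc]; [|lra].
    enough (yc - yn <= xn - xc) by lra.
    apply Rnot_lt_le. intro Hgt.
    assert ((yc - yn) * (yc + yn - 2 * yv) <= (xn - xc) * (xn + xc - 2 * xv)) by nra.
    nra.
Qed.

Lemma variation_bound_sqdist_increasing g U L :
  (forall t, 0 <= t <= 1 -> g t + t <= U) -> (forall t, 0 <= t <= 1 -> L <= g t - t) ->
  (forall q a b, 0 <= q <= a -> a < b -> b <= 1 -> sqdist g q a <= sqdist g q b) ->
  forall l c w v, incr_from c l -> (forall t, In t l -> t <= 1) ->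
    0 <= w <= c -> 0 <= v <= c -> c <= 1 ->
    variation_along g c l <= (last l c - c) + 2 * (U - (g w + w)) + 2 * ((g v - v) - L).
Proof.
  intros HU HL Hsq l. induction l as [|n l IH]; intros c w v Hi Hl1 Hw Hv Hc.
  - simpl. specialize (HU w ltac:(lra)). specialize (HL v ltac:(lra)). lra.
  - destruct Hi as [Hcn Hi]. rewrite last_cons. cbn [variation_along].
    assert (Hn : n <= 1) by (apply Hl1; now left).
    pose proof (Hsq w c n ltac:(lra) Hcn Hn) as Dw. pose proof (Hsq v c n ltac:(lra) Hcn Hn) as Dv.
    unfold sqdist in Dw, Dv.
    pose proof (step_rise_bound c (g c) n (g n) w (g w) v (g v) Hcn ltac:(lra) ltac:(lra)
                  ltac:(nra) ltac:(nra)) as Hstep.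
    set (w' := if Rle_dec (g w + w) (g n + n) then n else w).
    set (v' := if Rle_dec (g v - v) (g n - n) then v else n).
    assert (Hw' : 0 <= w' <= n /\ g w' + w' = Rmax (g w + w) (g n + n)).
    { unfold w', Rmax. destruct (Rle_dec (g w + w) (g n + n)); split; lra. }
    assert (Hv' : 0 <= v' <= n /\ g v' - v' = Rmin (g v - v) (g n - n)).
    { unfold v', Rmin. destruct (Rle_dec (g v - v) (g n - n)); split; lra. }
    pose proof (IH n w' v' Hi (fun t Ht => Hl1 t (or_intror Ht)) (proj1 Hw') (proj1 Hv') Hn).
    lra.
Qed.

(* Mirror image of the previous bound under x |-> -x; the witnesses now lie to the right
   and come out of the induction. *)
Lemma variation_bound_sqdist_decreasing g :
  (forall q a b, 0 <= a -> a < b -> b <= q -> q <= 1 -> sqdist g q b <= sqdist g q a) ->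
  forall l c, incr_from c l -> (forall t, In t l -> t <= 1) -> 0 <= c <= 1 ->
    exists w v, c <= w <= 1 /\ c <= v <= 1 /\
      variation_along g c l <= (last l c - c) + 2 * ((g w - w) - (g (last l c) - last l c))
                               + 2 * ((g (last l c) + last l c) - (g v + v)).
Proof.
  intros Hsq l. induction l as [|n l IH]; intros c Hi Hl1 Hc.
  - exists c, c. simpl. lra.
  - destruct Hi as [Hcn Hi]. rewrite last_cons. cbn [variation_along].
    assert (Hn : n <= 1) by (apply Hl1; now left).
    destruct (IH n Hi (fun t Ht => Hl1 t (or_intror Ht)) ltac:(lra)) as (w & v & Hw & Hv & Hvar).
    pose proof (Hsq w c n ltac:(lra) Hcn ltac:(lra) ltac:(lra)) as Dw.
    pose proof (Hsq v c n ltac:(lra) Hcn ltac:(lra) ltac:(lra)) as Dv.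
    unfold sqdist in Dw, Dv.
    pose proof (step_rise_bound (- n) (g n) (- c) (g c) (- w) (g w) (- v) (g v)
                  ltac:(lra) ltac:(lra) ltac:(lra) ltac:(nra) ltac:(nra)) as Hstep.
    rewrite Rabs_minus_sym in Hstep.
    set (w' := if Rle_dec (g w - w) (g c - c) then c else w).
    set (v' := if Rle_dec (g v + v) (g c + c) then v else c).
    exists w', v'.
    assert (Hw' : c <= w' <= 1 /\ g w' - w' = Rmax (g w + - w) (g c + - c)).
    { unfold w', Rmax. destruct (Rle_dec (g w - w) (g c - c)), (Rle_dec (g w + - w) (g c + - c));
        split; lra. }
    assert (Hv' : c <= v' <= 1 /\ g v' + v' = Rmin (g v - - v) (g c - - c)).
    { unfold v', Rmin. destruct (Rle_dec (g v + v) (g c + c)), (Rle_dec (g v - - v) (g c - - c));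
        split; lra. }
    split; [apply Hw'|split; [apply Hv'|lra]].
Qed.

Lemma one_monotone_bounded_variation g :
  cont_on_01 g -> c_monotone 1 (graph01 g) -> bounded_variation_01 g.
Proof.
  intros Hg [before [Horder Hmono]].
  destruct (cont_on_01_bounded g Hg) as [B HB].
  assert (Hbound : forall t, 0 <= t <= 1 -> - B <= g t <= B)
    by (intros t Ht; specialize (HB t Ht); pose proof (Rle_abs (g t));
        pose proof (Rle_abs (- g t)); rewrite Rabs_Ropp in *; lra).
  exists (8 * B + 5). intros l [Hi Hlast].
  assert (Hl1 : forall t, In t l -> t <= 1).
  { intros t Ht. pose proof (incr_from_In l 0 t Hi Ht). lra. }
  destruct (graph_sqdist_monotone g Hg before Horder Hmono) as [Hincr|Hdecr].
  - pose proof (variation_bound_sqdist_increasing g (B + 1) (- B - 1)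
      ltac:(intros t Ht; specialize (Hbound t Ht); lra)
      ltac:(intros t Ht; specialize (Hbound t Ht); lra)
      Hincr l 0 0 0 Hi Hl1 ltac:(lra) ltac:(lra) ltac:(lra)).
    pose proof (Hbound 0 ltac:(lra)). rewrite Hlast in H. lra.
  - destruct (variation_bound_sqdist_decreasing g Hdecr l 0 Hi Hl1 ltac:(lra))
      as (w & v & Hw & Hv & Hvar).
    rewrite Hlast in Hvar.
    pose proof (Hbound 1 ltac:(lra)). pose proof (Hbound w Hw). pose proof (Hbound v Hv). lra.
Qed.

Theorem corollary6p6 (f : R -> R) :
  cont_on_01 f ->
  (bounded_variation_01 f <->
   exists g h : R -> R,
     cont_on_01 g /\ cont_on_01 h /\
     (forall x, 0 <= x <= 1 -> f x = g x + h x) /\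
     c_monotone 1 (graph01 g) /\ c_monotone 1 (graph01 h)).
Proof.
  intros Hf. split.
  - intros [M HM].
    exists (total_variation f), (fun t => f t - total_variation f t).
    pose proof (total_variation_cont f Hf M HM) as HV.
    split; [exact HV|]. split; [exact (cont_on_01_minus f _ Hf HV)|].
    split; [intros x _; ring|]. split; apply monotone_graph_1_monotone.
    + left. exact (total_variation_nondecreasing f M HM).
    + right. exact (minus_total_variation_nonincreasing f M HM).
  - intros (g & h & Hg & Hh & Hfgh & Mg & Mh).
    apply (bounded_variation_01_plus f g h Hfgh); now apply one_monotone_bounded_variation.
Qed.
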